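(* Let $R$ be an associative ring with identity, and let $a,b,c,d\in R$ satisfy $bdb=bac$ and $dbd=acd$. If $ac\in R^{D}$, then $bd\in R^{D}$, $(bd)^{D}=b\big((ac)^{D}\big)^2d$, and $i(bd)\le i(ac)+1$.
   Context: For $x\in R$, $\mathrm{comm}(x)=\{y\in R : xy=yx\}$ and $\mathrm{comm}^2(x)=\{y\in R : yz=zy \text{ for all } z\in\mathrm{comm}(x)\}$. An element $x\in R$ has a Drazin inverse if there is $y\in R$ with $y=yxy$, $y\in\mathrm{comm}^2(x)$ and $x-x^2y$ nilpotent; such $y$ is unique and denoted $x^D$; $R^D$ is the set of such $x$. The (Drazin) index $i(x)$ is the smallest $k\ge 0$ with $x^k=x^{k+1}x^D$. *)

From HB Require Import structures.
From mathcomp Require Import all_boot all_order all_algebra.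
Set Implicit Arguments. Unset Strict Implicit. Unset Printing Implicit Defensive.
Import GRing.Theory.
Local Open Scope ring_scope.

Definition commut (R : pzRingType) (x y : R) : Prop := x * y = y * x.

Definition commut2 (R : pzRingType) (x y : R) : Prop :=
  forall z : R, commut x z -> y * z = z * y.

Definition nilpotent (R : pzRingType) (x : R) : Prop :=
  exists n : nat, x ^+ n = 0.

Definition is_drazin_inv (R : pzRingType) (x y : R) : Prop :=
  [/\ y = y * x * y, commut2 x y & nilpotent (x - x ^+ 2 * y)].

Definition has_drazin (R : pzRingType) (x : R) : Prop :=
  exists y, is_drazin_inv x y.

Definition drazin_index (R : pzRingType) (x : R) (k : nat) : Prop :=
  exists y, [/\ is_drazin_inv x y, x ^+ k = x ^+ k.+1 * y &
    forall j : nat, (j < k)%N -> x ^+ j <> x ^+ j.+1 * y].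

From HB Require Import structures.
From mathcomp Require Import all_boot all_order all_algebra.
Import GRing.Theory.
Set Implicit Arguments. Unset Strict Implicit. Unset Printing Implicit Defensive.
Local Open Scope ring_scope.

(* Nilpotency of x - x^2 y corresponds to the index equation
   because (x - x^2 y)^(n+1) = x^(n+1) - x^(n+2) y, as xy is idempotent; the
   double-commutant condition follows from the index equation through the
   identities y = y^(n+1) x^n = x^n y^(n+1).

   Then, writing x = ac, y = x^D and w = b y^2 d, the hypotheses give
   (bd)^(m+1) = b x^m d, x(db) = (db)x (so y commutes with db), and
   bd w = w bd = b y d, w = w bd w, and x^n = x^(n+1) y implies
   (bd)^(n+1) = (bd)^(n+2) w.  Hence w = (bd)^D, and the index of bd is at
   most i(ac) + 1 by taking the least exponent satisfying the index equation. *)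

Lemma idem_expS (R : pzRingType) (p : R) m : p * p = p -> p ^+ m.+1 = p.
Proof. by move=> pp; elim: m => [|m IH]; rewrite ?expr1 // exprS IH. Qed.

Section DrazinBasics.
Variables (R : pzRingType) (x w : R).
Hypotheses (cwx : w * x = x * w) (wxw : w = w * x * w).

Lemma xw_idem : (x * w) * (x * w) = x * w.
Proof. by rewrite -mulrA (mulrA w) -wxw. Qed.

Lemma expS_xw m : x ^+ m.+1 * w ^+ m.+1 = x * w.
Proof. by rewrite -exprMn_comm ?idem_expS ?xw_idem. Qed.

Lemma pow_defect n : (x - x ^+ 2 * w) ^+ n.+1 = x ^+ n.+1 - x ^+ n.+2 * w.
Proof.
have -> : x - x ^+ 2 * w = x * (1 - x * w) by rewrite mulrBr mulr1 expr2 mulrA.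
have cx : GRing.comm x (1 - x * w).
  by apply: commrB; [exact: commr1 | apply: commrM; [exact: commr_refl|]].
have idem : (1 - x * w) * (1 - x * w) = 1 - x * w.
  by rewrite mulrBr mulr1 mulrBl mul1r xw_idem subrr subr0.
by rewrite exprMn_comm // (idem_expS n idem) mulrBr mulr1 mulrA -exprSr.
Qed.

Lemma w_absorbs_expS_xw m : w * (x * w) ^+ m = w.
Proof.
elim: m => [|m IH]; first by rewrite mulr1.
by rewrite exprSr mulrA IH mulrA -wxw.
Qed.

(* An index equation forces w into the double commutant of x: for z
   commuting with x, both wz and zw equal (wx) z w. *)
Lemma comm2_of_index n : x ^+ n = x ^+ n.+1 * w -> commut2 x w.
Proof.
move=> hn z czx.
have cxw : GRing.comm x w by [].
have cz k : z * x ^+ k = x ^+ k * z by apply/commrX.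
have cpow j k : w ^+ j * x ^+ k = x ^+ k * w ^+ j by apply/commrX/commr_sym/commrX.
have cwn : w * x ^+ n = x ^+ n * w by apply/commrX.
have w_left : w = x ^+ n * w ^+ n.+1.
  by rewrite -{1}(w_absorbs_expS_xw n) exprMn_comm // mulrA cwn -mulrA -exprS.
have w_right : w = w ^+ n.+1 * x ^+ n by rewrite cpow.
have hn' : x ^+ n = w * x ^+ n.+1 by rewrite hn; apply/commr_sym/commrX.
have wx_pow : w ^+ n.+1 * x ^+ n.+1 = w * x by rewrite cpow expS_xw cwx.
have wz : w * z = w * x * z * w.
  by rewrite {1}w_right -mulrA -cz {1}hn (mulrA z) cz !mulrA wx_pow.
have zw : z * w = w * x * z * w.
  rewrite {1}w_left mulrA cz {1}hn' -(mulrA w) -cz -!mulrA expS_xw.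
  by rewrite (mulrA z) -czx !mulrA.
by rewrite wz zw.
Qed.

Lemma nilpotent_defectP :
  nilpotent (x - x ^+ 2 * w) <-> exists n, x ^+ n = x ^+ n.+1 * w.
Proof.
split=> [[m nil_m] | [n hn]].
  exists m.+1; apply/eqP; rewrite -subr_eq0 -pow_defect //.
  by rewrite exprSr nil_m mul0r.
by exists n.+1; rewrite pow_defect // exprS -mulrA -hn -exprS subrr.
Qed.
End DrazinBasics.

Lemma drazin_invP (R : pzRingType) (x w : R) :
  is_drazin_inv x w <->
  [/\ w * x = x * w, w = w * x * w & exists n, x ^+ n = x ^+ n.+1 * w].
Proof.
split=> [[wxw c2 nil] | [cwx wxw [n hn]]].
  have cwx : w * x = x * w by apply: c2.
  by split=> //; apply/nilpotent_defectP.
split=> //; first exact: (comm2_of_index cwx wxw hn).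
by apply/nilpotent_defectP => //; exists n.
Qed.

Lemma drazin_index_le (R : pzRingType) (x w : R) n :
  is_drazin_inv x w -> x ^+ n = x ^+ n.+1 * w ->
  exists2 m, drazin_index x m & (m <= n)%N.
Proof.
move=> hw hn.
have ex_n : exists j, x ^+ j == x ^+ j.+1 * w by exists n; apply/eqP.
case: (ex_minnP ex_n) => m /eqP hm min_m.
exists m; last by apply/min_m/eqP.
exists w; split=> // j lt_jm /eqP/min_m.
by rewrite leqNgt lt_jm.
Qed.

Section ProductTransfer.
Variables (R : pzRingType) (a b c d y : R).
Hypotheses (h1 : b * d * b = b * a * c) (h2 : d * b * d = a * c * d).
Hypotheses (cyx : y * (a * c) = (a * c) * y) (yxy : y = y * (a * c) * y).
Hypothesis ydb : y * (d * b) = d * b * y.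

Local Notation x := (a * c).
Local Notation w := (b * y ^+ 2 * d).

Lemma bdb_eq : b * d * b = b * x.
Proof. by rewrite h1 mulrA. Qed.

(* db commutes with ac, so a Drazin inverse of ac commutes with db. *)
Lemma db_comm_x : commut x (d * b).
Proof. by rewrite /commut mulrA -h2 -!mulrA (mulrA b d b) bdb_eq !mulrA. Qed.

Lemma bd_expS m : (b * d) ^+ m.+1 = b * x ^+ m * d.
Proof.
elim: m => [|m IH]; first by rewrite expr1 expr0 mulr1.
by rewrite exprSr IH -!mulrA (mulrA d b d) h2 (mulrA (_ ^+ m)) -exprSr mulrA.
Qed.

Lemma xyy_l u : u * x * y * y = u * y.
Proof. by rewrite -(mulrA (u * x)) -(mulrA u) (mulrA x) -cyx -yxy. Qed.

Lemma yyx_l u : u * y * y * x = u * y.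
Proof. by rewrite -(mulrA (u * y)) cyx mulrA -(mulrA u y) -(mulrA u) -yxy. Qed.

Lemma bd_w : b * d * w = b * y * d.
Proof. by rewrite expr2 !mulrA bdb_eq xyy_l. Qed.

Lemma w_bd : w * (b * d) = b * y * d.
Proof.
by rewrite expr2 !mulrA -(mulrA _ d b) -(mulrA _ (d * b) d) h2 mulrA yyx_l.
Qed.

Lemma w_inner : w = w * (b * d) * w.
Proof.
rewrite w_bd expr2 !mulrA -(mulrA b y d) -(mulrA b (y * d) b) -(mulrA y d b) ydb.
by rewrite !mulrA bdb_eq xyy_l.
Qed.

Lemma bd_index n : x ^+ n = x ^+ n.+1 * y -> (b * d) ^+ n.+1 = (b * d) ^+ n.+2 * w.
Proof.
move=> hn; rewrite [(b * d) ^+ n.+2]exprSr -mulrA bd_w !bd_expS !mulrA.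
rewrite -(mulrA _ d b) -(mulrA _ (d * b) y) -ydb !mulrA -(mulrA _ d b) -(mulrA _ (d * b) d) h2.
by rewrite mulrA -(mulrA _ y x) cyx mulrA -(mulrA b _ x) -exprSr -(mulrA b _ y) -hn.
Qed.

Lemma bd_drazin n : x ^+ n = x ^+ n.+1 * y -> is_drazin_inv (b * d) w.
Proof.
move=> hn; apply/drazin_invP; split; first by rewrite w_bd bd_w.
  exact: w_inner.
by exists n.+1; apply: bd_index.
Qed.
End ProductTransfer.

Lemma drazin_transfer (R : pzRingType) (a b c d y : R) :
  b * d * b = b * a * c -> d * b * d = a * c * d -> is_drazin_inv (a * c) y ->
  is_drazin_inv (b * d) (b * y ^+ 2 * d) /\
  (forall n, (a * c) ^+ n = (a * c) ^+ n.+1 * y ->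
     (b * d) ^+ n.+1 = (b * d) ^+ n.+2 * (b * y ^+ 2 * d)).
Proof.
move=> h1 h2 hy; have [_ y_comm2 _] := hy.
have /drazin_invP [cyx yxy [n hn]] := hy.
have ydb := y_comm2 _ (db_comm_x h1 h2).
by split=> [|m]; [apply: (bd_drazin h1 h2 cyx yxy ydb hn) | apply: bd_index].
Qed.

Theorem theorem3p4 (R : pzRingType) (a b c d : R)
  (h1 : b * d * b = b * a * c) (h2 : d * b * d = a * c * d)
  (hD : has_drazin (a * c)) :
  has_drazin (b * d) /\
  (forall y : R, is_drazin_inv (a * c) y ->
     is_drazin_inv (b * d) (b * (y ^+ 2) * d)) /\
  (forall k : nat, drazin_index (a * c) k ->
     exists2 m : nat, drazin_index (b * d) m & (m <= k.+1)%N).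
Proof.
have [y hy] := hD.
split; first by exists (b * y ^+ 2 * d); case: (drazin_transfer h1 h2 hy).
split=> [z hz | k [z [hz hk _]]]; first by case: (drazin_transfer h1 h2 hz).
have [hw w_index] := drazin_transfer h1 h2 hz.
exact: drazin_index_le hw (w_index k hk).
Qed.
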